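(* Let $H:\mathbb{R}\times\mathbb{R}^2\to\mathbb{R}^2$, $H(p,x)=(x_1-p,\,-x_2+x_2^2)$, $g:\mathbb{R}^2\to\mathbb{R}^2$, $g(x)=(0.5x_1-0.5x_1^2-x_2,\ 0.5x_1-0.5x_1^2+x_2)$, $D=\mathbb{R}^2_-$, $\Gamma=g^{-1}(D)$, and $S(p)=\{x\in\mathbb{R}^2\mid 0\in H(p,x)+\hat N_\Gamma(x)\}$. Then $S$ has the Aubin property around $(\bar p,\bar x)=(0,(0,0))$, and for every $q\in\mathbb{R}$, $DS(0,(0,0))(q)$ is the set of $u\in\mathbb{R}^2$ for which there exists $\xi\in\mathbb{R}^2$ with $$0=\begin{pmatrix}-q\\0\end{pmatrix}+\begin{pmatrix}u_1\\-u_2\end{pmatrix}+\begin{pmatrix}0.5&0.5\\-1&1\end{pmatrix}\xi,\qquad \xi\in N_{\mathbb{R}^2_-}\!\begin{pmatrix}0.5u_1-u_2\\0.5u_1+u_2\end{pmatrix}.$$ Explicitly, for $q\le0$ this set is $\{(q,0),(\tfrac43q,-\tfrac23q),(\tfrac43q,\tfrac23q)\}$ and for $q\ge0$ it is $\{(0,0)\}$.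
   Context: $\hat N_\Gamma$ is the regular (Fréchet) normal cone $\hat N_\Gamma(x)=(T_\Gamma(x))^\circ$ with $T_\Gamma(x)=\limsup_{t\searrow0}(\Gamma-x)/t$, and $\hat N_\Gamma(x)=\emptyset$ for $x\notin\Gamma$. $N_{\mathbb{R}^2_-}$ is the convex-analysis normal cone (empty outside $\mathbb{R}^2_-$). Aubin property of $S$ around $(\bar p,\bar x)$: there exist neighborhoods $U$ of $\bar p$, $V$ of $\bar x$ and $\kappa>0$ with $S(p_1)\cap V\subset S(p_2)+\kappa|p_1-p_2|\mathbb{B}$ for all $p_1,p_2\in U$. $DS(\bar p,\bar x)(q)=\{u\mid (q,u)\in T_{\operatorname{gph}S}(\bar p,\bar x)\}$ is the graphical derivative. *)

From Stdlib Require Import Reals.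
Open Scope R_scope.

Definition R2 := (R * R)%type.

Definition add2 (x y : R2) : R2 := (fst x + fst y, snd x + snd y).
Definition sub2 (x y : R2) : R2 := (fst x - fst y, snd x - snd y).
Definition scal2 (a : R) (x : R2) : R2 := (a * fst x, a * snd x).
Definition dot2 (x y : R2) : R := fst x * fst y + snd x * snd y.
Definition norm2 (x : R2) : R := sqrt (dot2 x x).

(* Convergence of a sequence in R^2 (componentwise = in norm). *)
Definition cv2 (u : nat -> R2) (l : R2) : Prop :=
  Un_cv (fun k => fst (u k)) (fst l) /\ Un_cv (fun k => snd (u k)) (snd l).

Definition tangent_cone (Gamma : R2 -> Prop) (x : R2) (w : R2) : Prop :=
  exists (t : nat -> R) (wk : nat -> R2),
    (forall k, 0 < t k) /\ Un_cv t 0 /\ cv2 wk w /\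
    (forall k, Gamma (add2 x (scal2 (t k) (wk k)))).

Definition reg_normal_cone (Gamma : R2 -> Prop) (x : R2) (v : R2) : Prop :=
  Gamma x /\ forall w, tangent_cone Gamma x w -> dot2 v w <= 0.

Definition R2_minus (y : R2) : Prop := fst y <= 0 /\ snd y <= 0.

Definition normal_cone_R2_minus (y : R2) (xi : R2) : Prop :=
  R2_minus y /\ forall z, R2_minus z -> dot2 xi (sub2 z y) <= 0.

Definition H (p : R) (x : R2) : R2 := (fst x - p, - snd x + snd x ^ 2).
Definition g (x : R2) : R2 :=
  ((1/2) * fst x - (1/2) * fst x ^ 2 - snd x,
   (1/2) * fst x - (1/2) * fst x ^ 2 + snd x).
Definition Gamma (x : R2) : Prop := R2_minus (g x).

Definition S (p : R) (x : R2) : Prop :=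
  exists v, reg_normal_cone Gamma x v /\ add2 (H p x) v = (0, 0).

(* Aubin property of a set-valued map around (pb, xb); neighborhoods are
   taken to be open balls (equivalent, since the property is inherited by
   smaller neighborhoods). *)
Definition aubin (F : R -> R2 -> Prop) (pb : R) (xb : R2) : Prop :=
  exists (delta eps kappa : R), 0 < delta /\ 0 < eps /\ 0 < kappa /\
    forall p1 p2 x,
      Rabs (p1 - pb) < delta -> Rabs (p2 - pb) < delta ->
      F p1 x -> norm2 (sub2 x xb) < eps ->
      exists y, F p2 y /\ norm2 (sub2 x y) <= kappa * Rabs (p1 - p2).

(* Graphical derivative: (q,u) in the tangent cone to gph F at (pb,xb). *)
Definition graph_deriv (F : R -> R2 -> Prop) (pb : R) (xb : R2)
    (q : R) (u : R2) : Prop :=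
  exists (t : nat -> R) (qk : nat -> R) (uk : nat -> R2),
    (forall k, 0 < t k) /\ Un_cv t 0 /\ Un_cv qk q /\ cv2 uk u /\
    (forall k, F (pb + t k * qk k) (add2 xb (scal2 (t k) (uk k)))).

From Stdlib Require Import Reals Lra Lia.
Open Scope R_scope.

(* Writing psi s = (s^2 - s)/2, the feasible set is Gamma = { |x2| <= psi x1 }.
   Near the origin S(p) consists of the point (min(p,0), 0) together with, for each
   sign sg, the boundary point (s, sg psi s) with p = p_curve sg s, the value of
   p for which - H(p, x) is normal to Gamma at that point.
   On [-1/10, 0] the map p_curve sg has slope at least 1/2, so its inverse is
   Lipschitz: this gives the Aubin property with modulus 4.  Rescaling these
   branches by 1/t and letting t go to 0 gives the graphical derivative: the
   point (min(q,0), 0) and, for q <= 0, the two rays ((4/3) q, +-(2/3) q), which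
   are exactly the solutions of the linearized multiplier system. *)

Lemma cv_const (a : R) : Un_cv (fun _ => a) a.
Proof. intros e He. exists 0%nat. intros n _. unfold Rdist. rewrite Rminus_diag, Rabs_R0. lra. Qed.

Lemma cv_scaled_harmonic (d : R) : Un_cv (fun k => d / (INR k + 1)) 0.
Proof.
  replace 0 with (d * 0) by ring.
  exact (CV_mult (fun _ => d) (fun k => RinvN k) d 0 (cv_const d) RinvN_cv).
Qed.

Lemma scaled_harmonic_bounds (d : R) (k : nat) : 0 < d -> 0 < d / (INR k + 1) <= d.
Proof.
  intros Hd. pose proof (pos_INR k). split.
  - apply Rdiv_lt_0_compat; lra.
  - apply Rmult_le_reg_r with (INR k + 1); [lra|].
    unfold Rdiv. rewrite Rmult_assoc, Rinv_l by lra. nra.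
Qed.

Lemma cv_eventually_zero (u : nat -> R) (l : R) :
  Un_cv u l -> (exists N, forall n, (N <= n)%nat -> u n = 0) -> l = 0.
Proof.
  intros Hu [N HN]. destruct (Req_dec l 0) as [|Hl]; [assumption|exfalso].
  destruct (Hu (Rabs l) (Rabs_pos_lt l Hl)) as [M HM].
  specialize (HM (N + M)%nat ltac:(lia)). rewrite HN in HM by lia.
  unfold Rdist in HM. rewrite Rminus_0_l, Rabs_Ropp in HM. lra.
Qed.

Lemma Rmin0_lipschitz (a b : R) : Rabs (Rmin a 0 - Rmin b 0) <= Rabs (a - b).
Proof. unfold Rmin, Rabs. repeat destruct Rle_dec; repeat destruct Rcase_abs; lra. Qed.

Lemma Rmin0_scale (t a : R) : 0 < t -> Rmin (t * a) 0 = t * Rmin a 0.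
Proof. intros Ht. unfold Rmin. repeat destruct Rle_dec; nra. Qed.

Lemma cv_Rmin0 (u : nat -> R) (l : R) :
  Un_cv u l -> Un_cv (fun k => Rmin (u k) 0) (Rmin l 0).
Proof.
  intros Hu e He. destruct (Hu e He) as [N HN]. exists N. intros n Hn.
  unfold Rdist. eapply Rle_lt_trans; [apply Rmin0_lipschitz | apply HN, Hn].
Qed.

(* [CV_minus] is tried before [CV_plus], which would otherwise match [Rminus] by unfolding. *)
Ltac cv_algebra :=
  repeat first [ apply cv_const | apply CV_minus | apply CV_plus | apply CV_mult
               | apply cv_cvabs | apply cv_Rmin0 | assumption ].

Lemma tangent_cone_of_segment (Gam : R2 -> Prop) (x w : R2) (d : R) :
  0 < d -> (forall t, 0 < t <= d -> Gam (add2 x (scal2 t w))) -> tangent_cone Gam x w.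
Proof.
  intros Hd Hseg. exists (fun k => d / (INR k + 1)), (fun _ => w).
  split; [|split; [|split]].
  - intros k. apply scaled_harmonic_bounds, Hd.
  - apply cv_scaled_harmonic.
  - split; apply cv_const.
  - intros k. apply Hseg, scaled_harmonic_bounds, Hd.
Qed.

Lemma graph_deriv_of_path (F : R -> R2 -> Prop) (pb : R) (xb : R2)
    (Q U1 U2 : R -> R) (d : R) :
  0 < d -> continuity_pt Q 0 -> continuity_pt U1 0 -> continuity_pt U2 0 ->
  (forall t, 0 < t <= d -> F (pb + t * Q t) (add2 xb (scal2 t (U1 t, U2 t)))) ->
  graph_deriv F pb xb (Q 0) (U1 0, U2 0).
Proof.
  intros Hd HQ H1 H2 Hpath. set (t := fun k => d / (INR k + 1)).
  assert (Ht : Un_cv t 0) by apply cv_scaled_harmonic.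
  exists t, (fun k => Q (t k)), (fun k => (U1 (t k), U2 (t k))).
  split; [|split; [|split; [|split]]].
  - intros k. apply scaled_harmonic_bounds, Hd.
  - exact Ht.
  - apply continuity_seq; assumption.
  - split; simpl; apply continuity_seq; assumption.
  - intros k. apply Hpath, scaled_harmonic_bounds, Hd.
Qed.

Definition is_sign (sg : R) : Prop := sg = 1 \/ sg = -1.

Definition psi (s : R) : R := (1/2) * (s ^ 2 - s).

Lemma Gamma_iff (x : R2) :
  Gamma x <-> forall sg, is_sign sg -> sg * snd x - psi (fst x) <= 0.
Proof.
  destruct x as [x1 x2]. unfold Gamma, R2_minus, g, psi; simpl. split.
  - intros [H1 H2] sg [-> | ->]; lra.
  - intros Hc. pose proof (Hc 1 (or_introl eq_refl)). pose proof (Hc (-1) (or_intror eq_refl)).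
    lra.
Qed.

Lemma constraint_along_ray (sg x1 x2 w1 w2 t : R) :
  sg * (x2 + t * w2) - psi (x1 + t * w1) =
  (sg * x2 - psi x1) + t * (sg * w2 - (x1 - 1/2) * w1) - t ^ 2 * ((1/2) * w1 ^ 2).
Proof. unfold psi. field. Qed.

Lemma affine_nonpos_near_zero (c d : R) : c <= 0 -> (c < 0 \/ d <= 0) ->
  exists dl, 0 < dl /\ forall t, 0 < t <= dl -> c + t * d <= 0.
Proof.
  intros Hc Hcd. destruct (Rle_or_lt d 0) as [Hd|Hd].
  - exists 1. split; [lra|]. intros t Ht. nra.
  - destruct Hcd as [Hc'|]; [|lra].
    exists (- c / d). split; [apply Rdiv_lt_0_compat; lra|].
    intros t [_ Ht].
    assert (t * d <= - c / d * d) by (apply Rmult_le_compat_r; lra).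
    replace (- c / d * d) with (- c) in * by (field; lra). lra.
Qed.

Lemma tangent_cone_Gamma_intro (x w : R2) : Gamma x ->
  (forall sg, is_sign sg ->
     sg * snd x - psi (fst x) < 0 \/ sg * snd w - (fst x - 1/2) * fst w <= 0) ->
  tangent_cone Gamma x w.
Proof.
  destruct x as [x1 x2], w as [w1 w2]; simpl. intros HG Hlin.
  rewrite Gamma_iff in HG; simpl in HG.
  destruct (affine_nonpos_near_zero _ _ (HG 1 (or_introl eq_refl)) (Hlin 1 (or_introl eq_refl)))
    as [d1 [Hd1 P1]].
  destruct (affine_nonpos_near_zero _ _ (HG (-1) (or_intror eq_refl)) (Hlin (-1) (or_intror eq_refl)))
    as [d2 [Hd2 P2]].
  apply (tangent_cone_of_segment _ _ _ (Rmin d1 d2)); [apply Rmin_pos; assumption|].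
  intros t [Ht Htd]. pose proof (Rmin_l d1 d2). pose proof (Rmin_r d1 d2).
  rewrite Gamma_iff. intros sg Hsg; simpl. rewrite constraint_along_ray.
  assert (0 <= t ^ 2 * ((1/2) * w1 ^ 2)) by nra.
  destruct Hsg as [-> | ->]; [specialize (P1 t ltac:(lra)) | specialize (P2 t ltac:(lra))]; lra.
Qed.

Lemma tangent_cone_Gamma_active (sg : R) (x w : R2) :
  is_sign sg -> sg * snd x = psi (fst x) -> tangent_cone Gamma x w ->
  sg * snd w - (fst x - 1/2) * fst w <= 0.
Proof.
  intros Hsg Hact [t [wk [Ht [Htc [[Hw1 Hw2] Hin]]]]].
  destruct x as [x1 x2], w as [w1 w2]; simpl in *.
  apply (Rle_cv_lim (Un := fun k => sg * snd (wk k) - (x1 - 1/2) * fst (wk k))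
                    (Vn := fun k => t k * ((1/2) * (fst (wk k) * fst (wk k))))).
  - intros k. specialize (Hin k). rewrite Gamma_iff in Hin. specialize (Hin sg Hsg).
    simpl in Hin. rewrite constraint_along_ray, Hact in Hin.
    apply Rmult_le_reg_l with (t k); [apply Ht|]. nra.
  - cv_algebra.
  - replace 0 with (0 * ((1/2) * (w1 * w1))) by ring. cv_algebra.
Qed.

Lemma S_iff (p : R) (x : R2) :
  S p x <-> reg_normal_cone Gamma x (p - fst x, snd x - snd x ^ 2).
Proof.
  destruct x as [x1 x2]. unfold S, H, add2; cbn [fst snd]. split.
  - intros [[v1 v2] [Hn Heq]]. injection Heq as E1 E2.
    replace (p - x1, x2 - x2 ^ 2) with (v1, v2); [assumption|]. f_equal; lra.
  - intros Hn. exists (p - x1, x2 - x2 ^ 2). split; [assumption|]. cbn [fst snd]. f_equal; ring.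
Qed.

Definition axis_point (p : R) : R2 := (Rmin p 0, 0).

Lemma axis_point_nonpos (p : R) : p <= 0 -> axis_point p = (p, 0).
Proof. intros Hp. unfold axis_point. rewrite Rmin_left by assumption. reflexivity. Qed.

Lemma axis_point_nonneg (p : R) : 0 <= p -> axis_point p = (0, 0).
Proof. intros Hp. unfold axis_point. rewrite Rmin_right by assumption. reflexivity. Qed.

Lemma S_axis_point (p : R) : S p (axis_point p).
Proof.
  destruct (Rle_or_lt p 0) as [Hp|Hp].
  - rewrite axis_point_nonpos by assumption. apply S_iff; split; simpl.
    + rewrite Gamma_iff. intros sg _. simpl. unfold psi. nra.
    + intros w _. unfold dot2; simpl. nra.
  - rewrite axis_point_nonneg by lra. apply S_iff; split; simpl.
    + rewrite Gamma_iff. intros sg _. simpl. unfold psi. lra.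
    + intros [w1 w2] Hw.
      assert (Hact : forall sg, sg * 0 = psi 0) by (intros; unfold psi; ring).
      pose proof (tangent_cone_Gamma_active 1 (0, 0) _ (or_introl eq_refl) (Hact 1) Hw).
      pose proof (tangent_cone_Gamma_active (-1) (0, 0) _ (or_intror eq_refl) (Hact (-1)) Hw).
      simpl in *. unfold dot2; simpl. nra.
Qed.

Definition p_curve (sg s : R) : R := s + (1/2 - s) * (psi s - sg * psi s ^ 2).

Lemma S_curve (sg s : R) : is_sign sg -> -1 <= s <= 0 ->
  S (p_curve sg s) (s, sg * psi s).
Proof.
  intros Hsg Hs.
  assert (Hpsi : 0 <= psi s <= 1) by (unfold psi; split; nra).
  assert (Hact : sg * (sg * psi s) = psi s) by (destruct Hsg as [-> | ->]; ring).
  apply S_iff; split; simpl.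
  - rewrite Gamma_iff. intros sg' Hsg'; simpl.
    destruct Hsg as [-> | ->], Hsg' as [-> | ->]; lra.
  - intros [w1 w2] Hw.
    pose proof (tangent_cone_Gamma_active sg (s, sg * psi s) _ Hsg Hact Hw) as Hlin; simpl in Hlin.
    assert (Hm : 0 <= psi s - sg * psi s ^ 2) by (destruct Hsg as [-> | ->]; nra).
    unfold dot2, p_curve; simpl.
    replace ((s + (1/2 - s) * (psi s - sg * psi s ^ 2) - s) * w1 +
             (sg * psi s - (sg * psi s) ^ 2) * w2)
      with ((psi s - sg * psi s ^ 2) * (sg * w2 - (s - 1/2) * w1))
      by (destruct Hsg as [-> | ->]; ring).
    nra.
Qed.

Lemma normal_on_curve (sg x1 x2 v1 v2 : R) : is_sign sg -> Gamma (x1, x2) ->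
  sg * x2 = psi x1 -> - sg * x2 - psi x1 < 0 ->
  (forall w, tangent_cone Gamma (x1, x2) w -> dot2 (v1, v2) w <= 0) ->
  v1 = sg * (1/2 - x1) * v2.
Proof.
  intros Hsg HG Hact Hother Hn.
  assert (Hdir : forall e, e = 1 \/ e = -1 ->
            tangent_cone Gamma (x1, x2) (e, e * (sg * (x1 - 1/2)))).
  { intros e He. apply tangent_cone_Gamma_intro; [assumption|]. simpl.
    intros sg' Hsg'. destruct Hsg as [-> | ->], Hsg' as [-> | ->], He as [-> | ->];
      first [left; lra | right; lra]. }
  pose proof (Hn _ (Hdir 1 (or_introl eq_refl))).
  pose proof (Hn _ (Hdir (-1) (or_intror eq_refl))).
  unfold dot2 in *; simpl in *. destruct Hsg as [-> | ->]; lra.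
Qed.

Lemma S_cases (p : R) (x : R2) : S p x -> fst x < 1 -> Rabs (snd x) < 1 ->
  x = axis_point p \/
  exists sg s, is_sign sg /\ s <= 0 /\ x = (s, sg * psi s) /\ p = p_curve sg s.
Proof.
  destruct x as [x1 x2]. rewrite S_iff. intros [HG Hn] Hx1 Hx2; cbn [fst snd] in *.
  apply Rabs_def2 in Hx2.
  pose proof HG as HG'. rewrite Gamma_iff in HG'; cbn [fst snd] in HG'.
  pose proof (HG' 1 (or_introl eq_refl)) as Gp. pose proof (HG' (-1) (or_intror eq_refl)) as Gm.
  assert (Hx1le : x1 <= 0) by (unfold psi in Gp, Gm; nra).
  destruct (Rle_lt_or_eq_dec _ _ Gp) as [Lp|Qp]; destruct (Rle_lt_or_eq_dec _ _ Gm) as [Lm|Qm].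
  - assert (Hv : tangent_cone Gamma (x1, x2) (p - x1, x2 - x2 ^ 2)).
    { apply tangent_cone_Gamma_intro; [assumption|]. intros sg [-> | ->]; left; cbn [fst snd]; lra. }
    pose proof (Hn _ Hv) as Hd. unfold dot2 in Hd; cbn [fst snd] in Hd.
    assert (Hsq : Rsqr (p - x1) + Rsqr (x2 - x2 ^ 2) = 0).
    { pose proof (Rle_0_sqr (p - x1)). pose proof (Rle_0_sqr (x2 - x2 ^ 2)).
      unfold Rsqr in *. lra. }
    destruct (Rplus_sqr_eq_0 _ _ Hsq) as [Hv1 Hv2].
    assert (Hfac : x2 * (1 - x2) = 0) by nra.
    assert (Hx20 : x2 = 0) by (destruct (Rmult_integral _ _ Hfac); lra).
    left. rewrite axis_point_nonpos by lra. f_equal; lra.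
  - right. exists (-1), x1. repeat split; [right; reflexivity | assumption | |].
    + f_equal; lra.
    + pose proof (normal_on_curve (-1) x1 x2 _ _ (or_intror eq_refl) HG ltac:(lra) ltac:(lra) Hn).
      unfold p_curve. replace (psi x1) with (- x2) by lra. nra.
  - right. exists 1, x1. repeat split; [left; reflexivity | assumption | |].
    + f_equal; lra.
    + pose proof (normal_on_curve 1 x1 x2 _ _ (or_introl eq_refl) HG ltac:(lra) ltac:(lra) Hn).
      unfold p_curve. replace (psi x1) with x2 by lra. nra.
  - assert (Hx20 : x2 = 0) by lra.
    assert (Hx10 : x1 = 0) by (unfold psi in Qp; nra). subst x1 x2.
    assert (Hw : tangent_cone Gamma (0, 0) (-1, 0)).
    { apply tangent_cone_Gamma_intro; [assumption|]. intros sg [-> | ->]; right; cbn [fst snd]; lra. }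
    pose proof (Hn _ Hw) as Hd. unfold dot2 in Hd; cbn [fst snd] in Hd.
    left. rewrite axis_point_nonneg by lra. reflexivity.
Qed.

Definition deriv_set (q : R) (u : R2) : Prop :=
  u = axis_point q \/
  (q <= 0 /\ exists sg, is_sign sg /\ u = ((4/3) * q, sg * (2/3) * q)).

Lemma graph_deriv_axis (q : R) : graph_deriv S 0 (0, 0) q (axis_point q).
Proof.
  apply (graph_deriv_of_path S 0 (0, 0) (fun _ => q) (fun _ => Rmin q 0) (fun _ => 0) 1);
    [lra | reg | reg | reg |].
  intros t [Ht _]. unfold add2, scal2; cbn [fst snd].
  replace (0 + t * q) with (t * q) by ring.
  replace (0 + t * Rmin q 0, 0 + t * 0) with (axis_point (t * q)); [apply S_axis_point|].
  unfold axis_point. rewrite Rmin0_scale by assumption. f_equal; ring.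
Qed.

Lemma graph_deriv_curve (sg q : R) : is_sign sg -> q <= 0 ->
  graph_deriv S 0 (0, 0) q ((4/3) * q, sg * (2/3) * q).
Proof.
  intros Hsg Hq.
  (* t (u1, U2 t) runs along the curve branch of sign [- sg], hitting S (t Q t). *)
  set (u1 := (4/3) * q).
  set (U2 := fun t => - sg * ((1/2) * (t * u1 * u1 - u1))).
  set (Q := fun t => u1 - sg * (1/2 - t * u1) * (U2 t - t * U2 t * U2 t)).
  assert (EQ : Q 0 = q) by (unfold Q, U2, u1; destruct Hsg as [-> | ->]; field).
  assert (EU : U2 0 = sg * (2/3) * q) by (unfold U2, u1; field).
  rewrite <- EU, <- EQ at 1.
  apply (graph_deriv_of_path S 0 (0, 0) Q (fun _ => u1) U2 (1 / (1 - u1)));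
    [apply Rdiv_lt_0_compat; unfold u1; lra | unfold Q, U2; reg | reg | unfold U2; reg |].
  intros t [Ht Htd].
  assert (Hs : -1 <= t * u1 <= 0).
  { assert (t * (1 - u1) <= 1 / (1 - u1) * (1 - u1))
      by (apply Rmult_le_compat_r; unfold u1 in *; lra).
    replace (1 / (1 - u1) * (1 - u1)) with 1 in * by (field; unfold u1; lra).
    unfold u1 in *; nra. }
  replace (0 + t * Q t) with (p_curve (- sg) (t * u1)).
  - replace (add2 (0, 0) (scal2 t (u1, U2 t))) with (t * u1, - sg * psi (t * u1)).
    + apply S_curve; [destruct Hsg as [-> | ->]; [right | left]; ring | assumption].
    + unfold add2, scal2, U2, psi; cbn [fst snd]. f_equal; field.
  - unfold p_curve, Q, U2, psi. destruct Hsg as [-> | ->]; field.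
Qed.

(* Each factor of [residual t] vanishes on one branch of { (Q, U) | t U in S (t Q) },
   the curve equations being divided by t.  Being continuous in t as well, the product
   also vanishes at t = 0 in the limit, so no subsequence of a single branch is needed. *)
Definition axis_residual (Q U1 U2 : R) : R := Rabs (U1 - Rmin Q 0) + Rabs U2.

Definition curve_residual (sg t Q U1 U2 : R) : R :=
  Rabs (U2 - sg * ((1/2) * (t * U1 * U1 - U1))) +
  Rabs (Q - U1 - sg * (1/2 - t * U1) * (U2 - t * U2 * U2)) + (Rabs U1 + U1).

Definition residual (t Q U1 U2 : R) : R :=
  axis_residual Q U1 U2 * curve_residual 1 t Q U1 U2 * curve_residual (-1) t Q U1 U2.

Lemma curve_residual_zero (sg t Q U1 U2 : R) : is_sign sg -> 0 < t ->
  t * U1 <= 0 -> t * U2 = sg * psi (t * U1) -> t * Q = p_curve sg (t * U1) ->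
  curve_residual sg t Q U1 U2 = 0.
Proof.
  intros Hsg Ht HU1 HU2 HQ.
  assert (E1 : t * (U2 - sg * ((1/2) * (t * U1 * U1 - U1))) = 0).
  { rewrite Rmult_minus_distr_l, HU2. unfold psi. ring. }
  assert (E2 : t * (Q - U1 - sg * (1/2 - t * U1) * (U2 - t * U2 * U2)) = 0).
  { replace (t * (Q - U1 - sg * (1/2 - t * U1) * (U2 - t * U2 * U2)))
      with (t * Q - t * U1 - sg * (1/2 - t * U1) * (t * U2 - (t * U2) * (t * U2))) by ring.
    rewrite HQ, HU2. unfold p_curve. destruct Hsg as [-> | ->]; ring. }
  apply Rmult_integral in E1, E2.
  destruct E1 as [|E1]; [lra|]. destruct E2 as [|E2]; [lra|].
  unfold curve_residual. rewrite E1, E2, Rabs_R0, Rabs_left1 by nra. ring.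
Qed.

Lemma residual_zero_of_S (t Q U1 U2 : R) : 0 < t ->
  Rabs (t * U1) < 1 -> Rabs (t * U2) < 1 ->
  S (0 + t * Q) (add2 (0, 0) (scal2 t (U1, U2))) -> residual t Q U1 U2 = 0.
Proof.
  intros Ht H1 H2 HS. unfold add2, scal2 in HS; cbn [fst snd] in HS.
  rewrite !Rplus_0_l in HS. apply Rabs_def2 in H1.
  destruct (S_cases _ _ HS ltac:(cbn [fst]; lra) H2)
    as [Eax | [sg [s [Hsg [Hs [Ex Ep]]]]]]; unfold residual.
  - unfold axis_point in Eax. injection Eax as E1 E2.
    rewrite Rmin0_scale in E1 by assumption.
    apply Rmult_eq_reg_l in E1; [|lra].
    assert (HU2 : U2 = 0) by (apply Rmult_integral in E2; lra).
    unfold axis_residual. rewrite E1, HU2, Rminus_diag, Rabs_R0. ring.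
  - injection Ex as E1 E2. subst s.
    pose proof (curve_residual_zero sg t Q U1 U2 Hsg Ht Hs E2 Ep) as Z.
    destruct Hsg as [-> | ->]; rewrite Z; ring.
Qed.

Lemma abs_sum_eq_0 (a b : R) : Rabs a + Rabs b = 0 -> a = 0 /\ b = 0.
Proof. unfold Rabs; repeat destruct Rcase_abs; lra. Qed.

Lemma abs_sum_nonpos_part_eq_0 (a b c : R) :
  Rabs a + Rabs b + (Rabs c + c) = 0 -> a = 0 /\ b = 0 /\ c <= 0.
Proof. unfold Rabs; repeat destruct Rcase_abs; lra. Qed.

Lemma deriv_set_of_residual (q u1 u2 : R) : residual 0 q u1 u2 = 0 -> deriv_set q (u1, u2).
Proof.
  unfold residual, axis_residual, curve_residual. intros H0.
  destruct (Rmult_integral _ _ H0) as [H1|Hm]; [destruct (Rmult_integral _ _ H1) as [Ha|Hp]|].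
  - apply abs_sum_eq_0 in Ha as [E1 E2]. left. unfold axis_point. f_equal; lra.
  - apply abs_sum_nonpos_part_eq_0 in Hp as [E1 [E2 E3]].
    right. split; [lra|]. exists (-1). split; [right; reflexivity | f_equal; lra].
  - apply abs_sum_nonpos_part_eq_0 in Hm as [E1 [E2 E3]].
    right. split; [lra|]. exists 1. split; [left; reflexivity | f_equal; lra].
Qed.

Lemma deriv_set_of_graph_deriv (q : R) (u : R2) :
  graph_deriv S 0 (0, 0) q u -> deriv_set q u.
Proof.
  destruct u as [u1 u2]. intros [t [qk [uk [Ht [Htc [Hqc [[Hu1 Hu2] Hin]]]]]]].
  cbn [fst snd] in Hu1, Hu2. apply deriv_set_of_residual.
  apply (cv_eventually_zero (fun k => residual (t k) (qk k) (fst (uk k)) (snd (uk k)))).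
  - unfold residual, axis_residual, curve_residual. cv_algebra.
  - destruct (CV_mult _ _ _ _ Htc Hu1 1 Rlt_0_1) as [N1 HN1].
    destruct (CV_mult _ _ _ _ Htc Hu2 1 Rlt_0_1) as [N2 HN2].
    exists (N1 + N2)%nat. intros n Hn.
    specialize (HN1 n ltac:(lia)). specialize (HN2 n ltac:(lia)). specialize (Hin n).
    unfold Rdist in HN1, HN2. rewrite Rmult_0_l, Rminus_0_r in HN1, HN2.
    destruct (uk n) as [U1 U2]. apply residual_zero_of_S; auto.
Qed.

Lemma graph_deriv_S_iff (q : R) (u : R2) :
  graph_deriv S 0 (0, 0) q u <-> deriv_set q u.
Proof.
  split; [apply deriv_set_of_graph_deriv|].
  intros [-> | [Hq [sg [Hsg ->]]]]; [apply graph_deriv_axis | apply graph_deriv_curve; assumption].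
Qed.

Lemma multiplier_system_iff (q : R) (u : R2) :
  (exists xi : R2,
     (0, 0) = ( - q + fst u + ((1/2) * fst xi + (1/2) * snd xi),
                0 - snd u + ((-1) * fst xi + 1 * snd xi) ) /\
     normal_cone_R2_minus ((1/2) * fst u - snd u, (1/2) * fst u + snd u) xi)
  <-> deriv_set q u.
Proof.
  destruct u as [u1 u2]. unfold deriv_set, normal_cone_R2_minus, R2_minus, dot2, sub2.
  cbn [fst snd]. split.
  - intros [[xi1 xi2] [Heq [[Y1 Y2] Hz]]]. cbn [fst snd] in *. injection Heq as E1 E2.
    pose proof (Hz ((1/2) * u1 - u2 - 1, (1/2) * u1 + u2) ltac:(cbn; lra)) as Z1.
    pose proof (Hz ((1/2) * u1 - u2, (1/2) * u1 + u2 - 1) ltac:(cbn; lra)) as Z2.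
    pose proof (Hz (0, (1/2) * u1 + u2) ltac:(cbn; lra)) as Z3.
    pose proof (Hz (2 * ((1/2) * u1 - u2), (1/2) * u1 + u2) ltac:(cbn; lra)) as Z4.
    pose proof (Hz ((1/2) * u1 - u2, 0) ltac:(cbn; lra)) as Z5.
    pose proof (Hz ((1/2) * u1 - u2, 2 * ((1/2) * u1 + u2)) ltac:(cbn; lra)) as Z6.
    cbn [fst snd] in Z1, Z2, Z3, Z4, Z5, Z6.
    assert (C1 : xi1 * ((1/2) * u1 - u2) = 0) by nra.
    assert (C2 : xi2 * ((1/2) * u1 + u2) = 0) by nra.
    destruct (Rmult_integral _ _ C1) as [P1|P1], (Rmult_integral _ _ C2) as [P2|P2].
    + left. rewrite axis_point_nonpos by lra. f_equal; lra.
    + right. split; [lra|]. exists (-1). split; [right; reflexivity | f_equal; lra].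
    + right. split; [lra|]. exists 1. split; [left; reflexivity | f_equal; lra].
    + left. rewrite axis_point_nonneg by lra. f_equal; lra.
  - intros [E | [Hq [sg [[-> | ->] E]]]]; injection E as -> ->.
    + destruct (Rle_or_lt q 0) as [Hq|Hq].
      * exists (0, 0). rewrite Rmin_left by assumption. cbn [fst snd]. split.
        { f_equal; lra. }
        split; [lra|]. intros z _. lra.
      * exists (q, q). rewrite Rmin_right by lra. cbn [fst snd]. split.
        { f_equal; lra. }
        split; [lra|]. intros [z1 z2] [Hz1 Hz2]. cbn [fst snd] in *. nra.
    + exists (- (2/3) * q, 0). cbn [fst snd]. split.
      { f_equal; lra. }
      split; [lra|]. intros [z1 z2] [Hz1 _]. cbn [fst snd] in *. nra.
    + exists (0, - (2/3) * q). cbn [fst snd]. split.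
      { f_equal; lra. }
      split; [lra|]. intros [z1 z2] [_ Hz2]. cbn [fst snd] in *. nra.
Qed.

Lemma deriv_set_nonpos (q : R) (u : R2) : q <= 0 ->
  deriv_set q u <->
  u = (q, 0) \/ u = ((4/3) * q, - (2/3) * q) \/ u = ((4/3) * q, (2/3) * q).
Proof.
  intros Hq. unfold deriv_set. rewrite axis_point_nonpos by assumption. split.
  - intros [-> | [_ [sg [[-> | ->] ->]]]]; [left | right; right | right; left];
      f_equal; ring.
  - intros [-> | [-> | ->]]; [left; reflexivity | right; split; [assumption|] ..].
    + exists (-1). split; [right; reflexivity | f_equal; ring].
    + exists 1. split; [left; reflexivity | f_equal; ring].
Qed.

Lemma deriv_set_nonneg (q : R) (u : R2) : 0 <= q -> deriv_set q u <-> u = (0, 0).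
Proof.
  intros Hq. unfold deriv_set. rewrite axis_point_nonneg by assumption. split.
  - intros [-> | [Hq' [sg [[-> | ->] ->]]]]; [reflexivity | ..];
      replace q with 0 by lra; f_equal; ring.
  - intros ->. left. reflexivity.
Qed.

Lemma abs_le_norm2 (x : R2) : Rabs (fst x) <= norm2 x /\ Rabs (snd x) <= norm2 x.
Proof.
  destruct x as [a b]. unfold norm2, dot2; cbn [fst snd].
  rewrite <- (sqrt_Rsqr_abs a), <- (sqrt_Rsqr_abs b). unfold Rsqr.
  split; apply sqrt_le_1_alt; nra.
Qed.

Lemma norm2_le_abs_sum (x : R2) : norm2 x <= Rabs (fst x) + Rabs (snd x).
Proof.
  destruct x as [a b]. unfold norm2, dot2; cbn [fst snd].
  pose proof (Rabs_pos a). pose proof (Rabs_pos b).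
  rewrite <- (sqrt_square (Rabs a + Rabs b)) by lra.
  apply sqrt_le_1_alt. unfold Rabs; repeat destruct Rcase_abs; nra.
Qed.

Lemma psi_bounds (s : R) : -1/10 <= s <= 0 -> 0 <= psi s <= (11/20) * (- s).
Proof. intros Hs. unfold psi. split; nra. Qed.

Lemma p_curve_bounds (sg s : R) : is_sign sg -> -1/10 <= s <= 0 ->
  s <= p_curve sg s <= (3/5) * s.
Proof.
  intros Hsg Hs. destruct (psi_bounds s Hs) as [C1 C2]. unfold p_curve.
  assert (C3 : psi s <= 11/200) by lra.
  assert (K : 0 <= psi s - sg * psi s ^ 2 <= (211/200) * psi s)
    by (destruct Hsg as [-> | ->]; split; nra).
  assert (0 <= (1/2 - s) * (psi s - sg * psi s ^ 2) <= (3/5) * ((211/200) * psi s))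
    by (split; nra).
  lra.
Qed.

(* [p_curve sg] has slope at least [1/2] on [[-1/10, 0]], while [psi] has slope at most [3/5]. *)
Lemma curve_point_lipschitz (sg s s' : R) : is_sign sg ->
  -1/10 <= s <= 0 -> -1/10 <= s' <= 0 ->
  norm2 (sub2 (s, sg * psi s) (s', sg * psi s')) <= 4 * Rabs (p_curve sg s - p_curve sg s').
Proof.
  intros Hsg Hs Hs'. eapply Rle_trans; [apply norm2_le_abs_sum|]. unfold sub2; cbn [fst snd].
  destruct (psi_bounds s Hs) as [C1 C2]. destruct (psi_bounds s' Hs') as [D1 D2].
  set (slope := 1 + (1/2 - s) * (1 - sg * (psi s + psi s')) * ((s + s' - 1) / 2)
                  - (psi s' - sg * psi s' ^ 2)).
  assert (EP : p_curve sg s - p_curve sg s' = (s - s') * slope).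
  { unfold p_curve, slope, psi. destruct Hsg as [-> | ->]; field. }
  assert (EC : sg * psi s - sg * psi s' = (s - s') * (sg * ((s + s' - 1) / 2))).
  { unfold psi. field. }
  assert (Hslope : 1/2 <= slope).
  { unfold slope.
    assert (89/100 <= 1 - sg * (psi s + psi s') <= 111/100)
      by (destruct Hsg as [-> | ->]; lra).
    set (b := 1 - sg * (psi s + psi s')) in *.
    assert (0 <= (1/2 - s) * b <= 2/3).
    { split; [nra|]. assert ((3/5 - (1/2 - s)) * b >= 0) by nra.
      assert ((1/2 - s) * (111/100 - b) >= 0) by nra. nra. }
    set (a := (1/2 - s) * b) in *.
    assert (-(2/5) <= a * ((s + s' - 1) / 2)).
    { assert ((2/3 - a) * (- ((s + s' - 1) / 2)) >= 0) by nra.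
      assert (a * ((s + s' - 1) / 2 + 3/5) >= 0) by nra. nra. }
    assert (psi s' - sg * psi s' ^ 2 <= 1/10) by (destruct Hsg as [-> | ->]; nra).
    lra. }
  assert (Hsgn : Rabs (sg * ((s + s' - 1) / 2)) <= 3/5).
  { destruct Hsg as [-> | ->]; unfold Rabs; destruct Rcase_abs; lra. }
  rewrite EP, EC, (Rabs_mult (s - s') (sg * _)), (Rabs_mult (s - s') slope),
    (Rabs_right slope) by lra.
  pose proof (Rabs_pos (s - s')). nra.
Qed.

Lemma p_curve_surjective (sg p : R) : is_sign sg -> -1/20 < p < 0 ->
  exists s, -1/10 <= s <= 0 /\ p_curve sg s = p.
Proof.
  intros Hsg Hp.
  assert (Hf : continuity (fun s => p_curve sg s - p)) by (unfold p_curve, psi; reg).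
  destruct (p_curve_bounds sg (-1/10) Hsg ltac:(lra)) as [_ Hm].
  assert (H0 : p_curve sg 0 = 0) by (unfold p_curve, psi; field).
  destruct (IVT (fun s => p_curve sg s - p) (-1/10) 0 Hf ltac:(lra) ltac:(cbv beta; lra)
                ltac:(cbv beta; lra)) as [s [Hs Es]].
  exists s. split; [assumption|]. cbv beta in Es. lra.
Qed.

Lemma aubin_S : aubin S 0 (0, 0).
Proof.
  exists (1/20), (1/20), 4. split; [lra|split; [lra|split; [lra|]]].
  intros p1 p2 x Hp1 Hp2 HS Hx.
  rewrite Rminus_0_r in Hp1, Hp2. apply Rabs_def2 in Hp1, Hp2.
  destruct (abs_le_norm2 (sub2 x (0, 0))) as [A1 A2].
  destruct x as [x1 x2]. unfold sub2 in A1, A2, Hx; cbn [fst snd] in A1, A2, Hx.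
  rewrite !Rminus_0_r in A1, A2, Hx.
  assert (B1 : x1 < 1/20 /\ - (1/20) < x1) by (apply Rabs_def2; lra).
  destruct (S_cases p1 (x1, x2) HS ltac:(cbn; lra) ltac:(cbn; lra))
    as [Eax | [sg [s [Hsg [Hs [Ex Ep]]]]]].
  - exists (axis_point p2). split; [apply S_axis_point|].
    rewrite Eax. eapply Rle_trans; [apply norm2_le_abs_sum|].
    unfold axis_point, sub2; cbn [fst snd]. rewrite Rminus_0_r, Rabs_R0.
    pose proof (Rmin0_lipschitz p1 p2). pose proof (Rabs_pos (p1 - p2)). lra.
  - injection Ex as -> ->. subst p1.
    destruct (p_curve_bounds sg s Hsg ltac:(lra)) as [_ Hneg].
    destruct (Rlt_or_le p2 0) as [H2|H2].
    + destruct (p_curve_surjective sg p2 Hsg ltac:(lra)) as [s2 [Hs2 <-]].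
      exists (s2, sg * psi s2). split; [apply S_curve; [assumption | lra]|].
      apply curve_point_lipschitz; [assumption | lra | lra].
    + exists (axis_point p2). split; [apply S_axis_point|].
      replace (axis_point p2) with (0, sg * psi 0)
        by (rewrite axis_point_nonneg by assumption; unfold psi; f_equal; ring).
      eapply Rle_trans; [apply curve_point_lipschitz; [assumption | lra | lra]|].
      replace (p_curve sg 0) with 0 by (unfold p_curve, psi; field).
      rewrite Rminus_0_r. unfold Rabs; repeat destruct Rcase_abs; lra.
Qed.

Theorem mainTheorem9 :
  aubin S 0 (0, 0) /\
  (forall (q : R) (u : R2),
     graph_deriv S 0 (0, 0) q u <->
     exists xi : R2,
       (0, 0) = ( - q + fst u + ((1/2) * fst xi + (1/2) * snd xi),
                  0 - snd u + ((-1) * fst xi + 1 * snd xi) ) /\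
       normal_cone_R2_minus ((1/2) * fst u - snd u, (1/2) * fst u + snd u) xi) /\
  (forall (q : R) (u : R2), q <= 0 ->
     (graph_deriv S 0 (0, 0) q u <->
      u = (q, 0) \/ u = ((4/3) * q, - (2/3) * q) \/ u = ((4/3) * q, (2/3) * q))) /\
  (forall (q : R) (u : R2), 0 <= q ->
     (graph_deriv S 0 (0, 0) q u <-> u = (0, 0))).
Proof.
  split; [exact aubin_S|]. split; [|split]; intros q u.
  - rewrite graph_deriv_S_iff. symmetry. apply multiplier_system_iff.
  - intros Hq. rewrite graph_deriv_S_iff. apply deriv_set_nonpos, Hq.
  - intros Hq. rewrite graph_deriv_S_iff. apply deriv_set_nonneg, Hq.
Qed.
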